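(* Let $P\in\Delta$ with $\mathcal Y=\mathcal Z$, and suppose that the marginal distributions of the pairs $(X,Y)$ and $(X,Z)$ are identical, i.e. $P(X=x,Y=w)=P(X=x,Z=w)$ for all $x\in\mathcal X$, $w\in\mathcal Y$. Then $\widetilde{UI}(X:Y\setminus Z)=\widetilde{UI}(X:Z\setminus Y)=0$, $\widetilde{SI}(X:Y;Z)=MI(X:Y)=MI(X:Z)$, and $\widetilde{CI}(X:Y;Z)=MI(X:Y|Z)=MI(X:Z|Y)$.
   Context: $X,Y,Z$ are random variables with finite state spaces $\mathcal X,\mathcal Y,\mathcal Z$. $\Delta$ denotes the set of all probability distributions on $\mathcal X\times\mathcal Y\times\mathcal Z$; $P\in\Delta$ is the joint distribution (unsubscripted quantities refer to $P$), a subscript $Q$ means computed w.r.t. $Q\in\Delta$. $\Delta_P=\{Q\in\Delta: Q(X=x,Y=y)=P(X=x,Y=y)\text{ and }Q(X=x,Z=z)=P(X=x,Z=z)\ \forall x,y,z\}$. $CoI_Q(X;Y;Z)=MI_Q(X:Y)-MI_Q(X:Y|Z)$. Define $\widetilde{UI}(X:Y\setminus Z)=\min_{Q\in\Delta_P}MI_Q(X:Y|Z)$, $\widetilde{UI}(X:Z\setminus Y)=\min_{Q\in\Delta_P}MI_Q(X:Z|Y)$, $\widetilde{SI}(X:Y;Z)=\max_{Q\in\Delta_P}CoI_Q(X;Y;Z)$, $\widetilde{CI}(X:Y;Z)=MI(X:(Y,Z))-\min_{Q\in\Delta_P}MI_Q(X:(Y,Z))$. *)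

From mathcomp Require Import all_boot.
From Stdlib Require Import Reals ClassicalEpsilon.

Set Implicit Arguments.
Unset Strict Implicit.
Unset Printing Implicit Defensive.

Local Open Scope R_scope.

Notation "\rsum_ ( i : T ) F" := (\big[Rplus/0%R]_(i : T) F)
  (at level 41, F at level 41, i, T at level 50).

Section Info.
Variables (X Y Z : finType).

Definition jdist := X -> Y -> Z -> R.

Definition is_prob (Q : jdist) : Prop :=
  (forall x y z, 0 <= Q x y z) /\
  \rsum_(x : X) \rsum_(y : Y) \rsum_(z : Z) Q x y z = 1.

Definition pXY (Q : jdist) x y := \rsum_(z : Z) Q x y z.
Definition pXZ (Q : jdist) x z := \rsum_(y : Y) Q x y z.
Definition pYZ (Q : jdist) y z := \rsum_(x : X) Q x y z.
Definition pX (Q : jdist) x := \rsum_(y : Y) \rsum_(z : Z) Q x y z.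
Definition pY (Q : jdist) y := \rsum_(x : X) \rsum_(z : Z) Q x y z.
Definition pZ (Q : jdist) z := \rsum_(x : X) \rsum_(y : Y) Q x y z.

(* p * ln (p / q), with the convention 0 * ln(0/q) = 0 *)
Definition plogr (p q : R) : R := if Rle_dec p 0 then 0 else p * ln (p / q).

Definition MI_XY (Q : jdist) : R :=
  \rsum_(x : X) \rsum_(y : Y) plogr (pXY Q x y) (pX Q x * pY Q y).
Definition MI_XZ (Q : jdist) : R :=
  \rsum_(x : X) \rsum_(z : Z) plogr (pXZ Q x z) (pX Q x * pZ Q z).
Definition MI_XY_Z (Q : jdist) : R :=
  \rsum_(x : X) \rsum_(y : Y) \rsum_(z : Z)
    plogr (Q x y z) (pXZ Q x z * pYZ Q y z / pZ Q z).
Definition MI_XZ_Y (Q : jdist) : R :=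
  \rsum_(x : X) \rsum_(y : Y) \rsum_(z : Z)
    plogr (Q x y z) (pXY Q x y * pYZ Q y z / pY Q y).
Definition MI_X_YZ (Q : jdist) : R :=
  \rsum_(x : X) \rsum_(y : Y) \rsum_(z : Z)
    plogr (Q x y z) (pX Q x * pYZ Q y z).
Definition CoI (Q : jdist) : R := MI_XY Q - MI_XY_Z Q.

Definition in_DeltaP (P Q : jdist) : Prop :=
  is_prob Q /\
  (forall x y, pXY Q x y = pXY P x y) /\
  (forall x z, pXZ Q x z = pXZ P x z).

End Info.

Definition is_min (S : R -> Prop) (m : R) : Prop := S m /\ forall v, S v -> m <= v.
Definition is_max (S : R -> Prop) (m : R) : Prop := S m /\ forall v, S v -> v <= m.
Definition min_val (S : R -> Prop) : R := epsilon (inhabits 0%R) (is_min S).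
Definition max_val (S : R -> Prop) : R := epsilon (inhabits 0%R) (is_max S).

Section Tilde.
Variables (X Y Z : finType).

Definition UIt_Y (P : jdist X Y Z) : R :=
  min_val (fun v => exists Q, in_DeltaP P Q /\ v = MI_XY_Z Q).
Definition UIt_Z (P : jdist X Y Z) : R :=
  min_val (fun v => exists Q, in_DeltaP P Q /\ v = MI_XZ_Y Q).
Definition SIt (P : jdist X Y Z) : R :=
  max_val (fun v => exists Q, in_DeltaP P Q /\ v = CoI Q).
Definition CIt (P : jdist X Y Z) : R :=
  MI_X_YZ P - min_val (fun v => exists Q, in_DeltaP P Q /\ v = MI_X_YZ Q).
End Tilde.

From HB Require Import structures.
From mathcomp Require Import all_boot.
From Stdlib Require Import Reals Lra ClassicalEpsilon.

Set Implicit Arguments.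
Unset Strict Implicit.
Unset Printing Implicit Defensive.
Local Open Scope R_scope.

(* Everything rests on three facts about an arbitrary joint distribution Q on
   X x Y x Z:
   - the chain rules  MI(X:(Y,Z)) = MI(X:Z) + MI(X:Y|Z) = MI(X:Y) + MI(X:Z|Y);
   - MI(X:Y|Z) >= 0 (Gibbs' inequality applied slice by slice in z);
   - MI(X:Y|Z) = 0 when X and Y are conditionally independent given Z.
   Moreover MI(X:Y) and MI(X:Z) are constant on Delta_P.  Hence, on Delta_P,
   CoI and MI(X:(Y,Z)) are affine in MI(X:Y|Z), and whenever some Q0 in
   Delta_P has MI_Q0(X:Y|Z) = 0, the three optimisation problems are solved
   by Q0: ~UI(X:Y\Z) = 0, ~SI = MI(X:Y), ~CI = MI(X:Y|Z).
   When Y and Z have the same alphabet and the pairs (X,Y), (X,Z) have the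
   same law, such a Q0 is the "diagonal coupling" Q0(x,y,z) = [y = z] P(x,y),
   in which Z is a copy of Y.  Finally MI(X:Y) = MI(X:Z) turns the two chain
   rules into MI_Q(X:Z|Y) = MI_Q(X:Y|Z) on Delta_P, which gives the remaining
   statements about ~UI(X:Z\Y) and MI(X:Z|Y). *)

HB.instance Definition _ :=
  Monoid.isComLaw.Build R 0 Rplus
    (fun a b c => esym (Rplus_assoc a b c)) Rplus_comm Rplus_0_l.

Section RealSums.
Variable T : finType.
Implicit Types F G : T -> R.

Lemma rsum_le F G :
  (forall i, F i <= G i) -> \rsum_(i : T) F i <= \rsum_(i : T) G i.
Proof. by move=> H; elim/big_rec2: _ => [|i a b _]; [lra | have := H i; lra]. Qed.

Lemma rsum_ge0 F : (forall i, 0 <= F i) -> 0 <= \rsum_(i : T) F i.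
Proof. by move=> H; elim/big_rec: _ => [|i a _]; [lra | have := H i; lra]. Qed.

Lemma rsum_term F j : (forall i, 0 <= F i) -> F j <= \rsum_(i : T) F i.
Proof.
move=> H; rewrite (bigD1 j) //=.
have : 0 <= \big[Rplus/0]_(i | i != j) F i.
  by elim/big_rec: _ => [|i a _]; [lra | have := H i; lra].
lra.
Qed.

Lemma rsum_mull c F : \rsum_(i : T) (c * F i) = c * \rsum_(i : T) F i.
Proof. by elim/big_rec2: _ => [|i a b _ ->]; ring. Qed.

Lemma rsum_sub F G :
  \rsum_(i : T) (F i - G i) = \rsum_(i : T) F i - \rsum_(i : T) G i.
Proof. by elim/big_rec3: _ => [|i a b c _ ->]; ring. Qed.

Lemma rsum_delta F j : \rsum_(i : T) (if i == j then F i else 0) = F j.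
Proof. by rewrite (bigD1 j) //= eqxx big1 ?Rplus_0_r // => i /negbTE ->. Qed.

End RealSums.

Lemma Rdiv_ge0 (a b : R) : 0 <= a -> 0 <= b -> 0 <= a / b.
Proof.
move=> ha hb; case: (Req_dec b 0) => [->|nb]; first by rewrite /Rdiv Rinv_0; lra.
by apply: Rmult_le_pos => //; left; apply: Rinv_0_lt_compat; lra.
Qed.

(* Pointwise Gibbs inequality: p ln (p/q) >= p - q, from ln t <= t - 1. *)
Lemma plogr_ge (p q : R) :
  0 <= p -> 0 <= q -> (0 < p -> 0 < q) -> p - q <= plogr p q.
Proof.
move=> hp hq hpq; rewrite /plogr; case: Rle_dec => h /=; first lra.
have p0 : 0 < p by lra.
have q0 := hpq p0.
have t0 : 0 < q / p by apply: Rdiv_lt_0_compat.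
have := exp_ineq1_le (ln (q / p)); rewrite exp_ln // => hln.
have -> : p / q = / (q / p) by field; lra.
rewrite ln_Rinv //.
have : p * (1 + ln (q / p)) <= p * (q / p) by apply: Rmult_le_compat_l; lra.
have -> : p * (q / p) = q by field; lra.
lra.
Qed.

Lemma min_val_eq (S : R -> Prop) (m : R) : is_min S m -> min_val S = m.
Proof.
move=> hm; rewrite /min_val.
have [h1 h2] := epsilon_spec (inhabits 0) (is_min S) (ex_intro _ m hm).
case: hm => m1 m2; have := h2 _ m1; have := m2 _ h1; lra.
Qed.

Lemma max_val_eq (S : R -> Prop) (m : R) : is_max S m -> max_val S = m.
Proof.
move=> hm; rewrite /max_val.
have [h1 h2] := epsilon_spec (inhabits 0) (is_max S) (ex_intro _ m hm).
case: hm => m1 m2; have := h2 _ m1; have := m2 _ h1; lra.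
Qed.

Section JointLaw.
Variables X Y Z : finType.
Implicit Types Q : jdist X Y Z.

Definition jnonneg Q := forall x y z, 0 <= Q x y z.

Section Marginals.
Variable Q : jdist X Y Z.
Hypothesis hQ : jnonneg Q.

Lemma pXZ_ge0 x z : 0 <= pXZ Q x z.
Proof. by apply: rsum_ge0 => y. Qed.

Lemma pYZ_ge0 y z : 0 <= pYZ Q y z.
Proof. by apply: rsum_ge0 => x. Qed.

Lemma pZ_ge0 z : 0 <= pZ Q z.
Proof. by apply: rsum_ge0 => x; apply: pXZ_ge0. Qed.

Lemma le_pXZ x y z : Q x y z <= pXZ Q x z.
Proof. exact: (rsum_term y (fun i => hQ x i z)). Qed.

Lemma le_pYZ x y z : Q x y z <= pYZ Q y z.
Proof. exact: (rsum_term x (fun i => hQ i y z)). Qed.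

Lemma le_pZ x z : pXZ Q x z <= pZ Q z.
Proof. exact: (rsum_term x (pXZ_ge0^~ z)). Qed.

Lemma le_pX x z : pXZ Q x z <= pX Q x.
Proof. rewrite /pX exchange_big; exact: (rsum_term z (pXZ_ge0 x)). Qed.

Lemma marginals_pos x y z : 0 < Q x y z ->
  [/\ 0 < pXZ Q x z, 0 < pYZ Q y z, 0 < pZ Q z & 0 < pX Q x].
Proof.
move=> q0; have := le_pXZ x y z; have := le_pYZ x y z.
have := le_pZ x z; have := le_pX x z; split; lra.
Qed.

End Marginals.

Lemma cond_product_mass Q z :
  \rsum_(x : X) \rsum_(y : Y) (pXZ Q x z * pYZ Q y z / pZ Q z) = pZ Q z.
Proof.
have sum_pYZ : \rsum_(y : Y) pYZ Q y z = pZ Q z by rewrite /pYZ exchange_big.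
under eq_bigr => x _.
  rewrite (eq_bigr (fun y => (pXZ Q x z / pZ Q z) * pYZ Q y z)) => [|y _];
    last by rewrite /Rdiv; ring.
  rewrite rsum_mull sum_pYZ (_ : _ * _ = (pZ Q z / pZ Q z) * pXZ Q x z);
    last by rewrite /Rdiv; ring.
  over.
rewrite rsum_mull -/(pZ Q z).
case: (Req_dec (pZ Q z) 0) => [->|ne]; first by rewrite /Rdiv Rinv_0; ring.
by field.
Qed.

Lemma MI_XY_Z_ge0 Q : jnonneg Q -> 0 <= MI_XY_Z Q.
Proof.
move=> hQ; pose Rr x y z := pXZ Q x z * pYZ Q y z / pZ Q z.
have Rr_ge0 x y z : 0 <= Rr x y z.
  by apply: Rdiv_ge0; [apply: Rmult_le_pos; [exact: pXZ_ge0 | exact: pYZ_ge0] | exact: pZ_ge0].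
have gibbs : \rsum_(x : X) \rsum_(y : Y) \rsum_(z : Z) (Q x y z - Rr x y z) <= MI_XY_Z Q.
  apply: rsum_le => x; apply: rsum_le => y; apply: rsum_le => z.
  apply: plogr_ge => // q0; have [? ? ? _] := marginals_pos hQ q0.
  by apply: Rdiv_lt_0_compat => //; apply: Rmult_lt_0_compat.
suff : \rsum_(x : X) \rsum_(y : Y) \rsum_(z : Z) (Q x y z - Rr x y z) = 0 by lra.
have slice z : \rsum_(x : X) \rsum_(y : Y) (Q x y z - Rr x y z) = 0.
  under eq_bigr => x _ do rewrite rsum_sub.
  by rewrite rsum_sub cond_product_mass -/(pZ Q z); ring.
under eq_bigr => x _ do rewrite exchange_big.
by rewrite exchange_big big1 // => z _; apply: slice.
Qed.

Lemma MI_XY_Z_indep Q : jnonneg Q ->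
  (forall x y z, Q x y z * pZ Q z = pXZ Q x z * pYZ Q y z) -> MI_XY_Z Q = 0.
Proof.
move=> hQ hind; apply: big1 => x _; apply: big1 => y _; apply: big1 => z _.
rewrite /plogr; case: Rle_dec => h //=.
have [_ _ pZ0 _] := marginals_pos hQ (Rnot_le_lt _ _ h).
rewrite -hind (_ : _ / _ = 1) ?ln_1; [ring | field; lra].
Qed.

Lemma chain_rule_Z Q : jnonneg Q -> MI_X_YZ Q = MI_XZ Q + MI_XY_Z Q.
Proof.
move=> hQ; pose L x z := ln (pXZ Q x z / (pX Q x * pZ Q z)).
have term x y z : plogr (Q x y z) (pX Q x * pYZ Q y z) =
    L x z * Q x y z + plogr (Q x y z) (pXZ Q x z * pYZ Q y z / pZ Q z).
  rewrite /plogr; case: Rle_dec => h /=.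
    have -> : Q x y z = 0 by have := hQ x y z; lra.
    ring.
  have q0 : 0 < Q x y z by lra.
  have [a0 b0 c0 d0] := marginals_pos hQ q0.
  rewrite /L (Rmult_comm (ln _)) -Rmult_plus_distr_l -ln_mult.
  - by congr (_ * ln _); field; lra.
  1,2: by repeat first [assumption | apply: Rdiv_lt_0_compat | apply: Rmult_lt_0_compat].
have MI_XZ_L : MI_XZ Q = \rsum_(x : X) \rsum_(y : Y) \rsum_(z : Z) (L x z * Q x y z).
  apply: eq_bigr => x _; rewrite [RHS]exchange_big; apply: eq_bigr => z _.
  rewrite rsum_mull -/(pXZ Q x z) /plogr /L; case: Rle_dec => h /=; last by ring.
  have -> : pXZ Q x z = 0 by have := pXZ_ge0 hQ x z; lra.
  ring.
rewrite MI_XZ_L /MI_X_YZ /MI_XY_Z.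
under eq_bigr => x _ do under eq_bigr => y _ do under eq_bigr => z _ do rewrite term.
under eq_bigr => x _ do under eq_bigr => y _ do rewrite big_split.
under eq_bigr => x _ do rewrite big_split.
by rewrite big_split.
Qed.

Definition swapYZ Q : jdist X Z Y := fun x z y => Q x y z.

Lemma pX_swapYZ Q x : pX (swapYZ Q) x = pX Q x.
Proof. by rewrite /pX exchange_big. Qed.

Lemma MI_XZ_swapYZ Q : MI_XZ (swapYZ Q) = MI_XY Q.
Proof. by apply: eq_bigr => x _; apply: eq_bigr => y _; rewrite pX_swapYZ. Qed.

Lemma MI_XY_Z_swapYZ Q : MI_XY_Z (swapYZ Q) = MI_XZ_Y Q.
Proof. by apply: eq_bigr => x _; rewrite exchange_big. Qed.

Lemma MI_X_YZ_swapYZ Q : MI_X_YZ (swapYZ Q) = MI_X_YZ Q.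
Proof.
apply: eq_bigr => x _; rewrite exchange_big.
by apply: eq_bigr => y _; apply: eq_bigr => z _; rewrite pX_swapYZ.
Qed.

(* MI(X:Y) and MI(X:Z) depend only on the pair marginals fixed by Delta_P. *)
Lemma MI_XY_DeltaP P Q : in_DeltaP P Q -> MI_XY Q = MI_XY P.
Proof.
case=> _ [eXY _]; apply: eq_bigr => x _; apply: eq_bigr => y _.
rewrite eXY /pX /pY; congr (plogr _ (_ * _)); apply: eq_bigr => i _; exact: eXY.
Qed.

Lemma MI_XZ_DeltaP P Q : in_DeltaP P Q -> MI_XZ Q = MI_XZ P.
Proof.
case=> _ [_ eXZ]; apply: eq_bigr => x _; apply: eq_bigr => z _.
rewrite eXZ /pX /pZ exchange_big [in RHS]exchange_big.
congr (plogr _ (_ * _)); apply: eq_bigr => i _; exact: eXZ.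
Qed.

End JointLaw.

Lemma chain_rule_Y (X Y Z : finType) (Q : jdist X Y Z) :
  jnonneg Q -> MI_X_YZ Q = MI_XY Q + MI_XZ_Y Q.
Proof.
move=> hQ; rewrite -MI_X_YZ_swapYZ chain_rule_Z ?MI_XZ_swapYZ ?MI_XY_Z_swapYZ //.
by move=> x z y; apply: hQ.
Qed.

Section DeltaPOptimum.
Variables X Y Z : finType.
Variable P : jdist X Y Z.

Lemma DeltaP_nonneg Q : in_DeltaP P Q -> jnonneg Q.
Proof. by case=> [[]]. Qed.

Lemma DeltaP_refl : is_prob P -> in_DeltaP P P.
Proof. by []. Qed.

Lemma min_DeltaP_zero (f : jdist X Y Z -> R) :
  (forall Q, in_DeltaP P Q -> 0 <= f Q) -> (exists Q, in_DeltaP P Q /\ f Q = 0) ->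
  min_val (fun v => exists Q, in_DeltaP P Q /\ v = f Q) = 0.
Proof.
move=> f_ge0 [Q0 [hQ0 f0]]; apply: min_val_eq; split; first by exists Q0.
by move=> v [Q [hQ ->]]; apply: f_ge0.
Qed.

(* If the two pair marginals carry the same information, the chain rules
   identify the two conditional mutual informations on Delta_P. *)
Lemma MI_XZ_Y_DeltaP Q :
  MI_XY P = MI_XZ P -> in_DeltaP P Q -> MI_XZ_Y Q = MI_XY_Z Q.
Proof.
move=> eqMI hQ; have hQn := DeltaP_nonneg hQ.
have := chain_rule_Y hQn; have := chain_rule_Z hQn.
rewrite (MI_XY_DeltaP hQ) (MI_XZ_DeltaP hQ) eqMI; lra.
Qed.

Section ZeroWitness.
Variable Q0 : jdist X Y Z.
Hypothesis hQ0 : in_DeltaP P Q0.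
Hypothesis hQ0_MI : MI_XY_Z Q0 = 0.

Lemma UIt_Y_zero : UIt_Y P = 0.
Proof.
apply: min_DeltaP_zero; last by exists Q0.
by move=> Q hQ; apply/MI_XY_Z_ge0/DeltaP_nonneg.
Qed.

Lemma UIt_Z_zero : MI_XY P = MI_XZ P -> UIt_Z P = 0.
Proof.
move=> eqMI; apply: min_DeltaP_zero; last by exists Q0; rewrite MI_XZ_Y_DeltaP.
by move=> Q hQ; rewrite MI_XZ_Y_DeltaP //; apply/MI_XY_Z_ge0/DeltaP_nonneg.
Qed.

Lemma SIt_eq_MI_XY : SIt P = MI_XY P.
Proof.
apply: max_val_eq; split.
  by exists Q0; rewrite /CoI hQ0_MI (MI_XY_DeltaP hQ0) Rminus_0_r.
move=> v [Q [hQ ->]]; rewrite /CoI (MI_XY_DeltaP hQ).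
by have := MI_XY_Z_ge0 (DeltaP_nonneg hQ); lra.
Qed.

Lemma CIt_eq_MI_XY_Z : is_prob P -> CIt P = MI_XY_Z P.
Proof.
move=> hP; rewrite /CIt (@min_val_eq _ (MI_XZ P)).
  by rewrite (chain_rule_Z (DeltaP_nonneg (DeltaP_refl hP))); ring.
split.
  by exists Q0; rewrite chain_rule_Z ?hQ0_MI ?(MI_XZ_DeltaP hQ0) ?Rplus_0_r //; exact: DeltaP_nonneg.
move=> v [Q [hQ ->]]; rewrite chain_rule_Z ?(MI_XZ_DeltaP hQ); last exact: DeltaP_nonneg.
by have := MI_XY_Z_ge0 (DeltaP_nonneg hQ); lra.
Qed.

End ZeroWitness.
End DeltaPOptimum.

Section DiagonalCoupling.
Variables TX TY : finType.
Variable P : jdist TX TY TY.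
Hypothesis hP : is_prob P.
Hypothesis hsym : forall x w, pXY P x w = pXZ P x w.

Definition diag_coupling : jdist TX TY TY :=
  fun x y z => if y == z then pXY P x y else 0.

Lemma pXY_diag x y : pXY diag_coupling x y = pXY P x y.
Proof.
rewrite /pXY /diag_coupling; under eq_bigr => z _ do rewrite eq_sym.
exact: (rsum_delta (fun _ => pXY P x y)).
Qed.

Lemma pXZ_diag x z : pXZ diag_coupling x z = pXY P x z.
Proof. exact: (rsum_delta (pXY P x)). Qed.

Lemma pYZ_diag y z :
  pYZ diag_coupling y z = if y == z then \rsum_(x : TX) pXY P x y else 0.
Proof. by rewrite /pYZ /diag_coupling; case: eqP => // _; rewrite big1. Qed.

Lemma diag_in_DeltaP : in_DeltaP P diag_coupling.
Proof.
have [P_ge0 P_mass] := hP.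
have pXY_ge0 x y : 0 <= pXY P x y by apply: rsum_ge0.
split; [split | split=> [|x z]; [exact: pXY_diag | by rewrite pXZ_diag hsym]].
  by move=> x y z; rewrite /diag_coupling; case: eqP => _ //; lra.
rewrite -P_mass; apply: eq_bigr => x _; apply: eq_bigr => y _; exact: pXY_diag.
Qed.

(* Y is a function of Z under the diagonal coupling, so X and Y are
   conditionally independent given Z. *)
Lemma diag_cond_indep : MI_XY_Z diag_coupling = 0.
Proof.
apply: MI_XY_Z_indep; first by case: diag_in_DeltaP => [[]].
move=> x y z; rewrite pXZ_diag pYZ_diag.
have -> : pZ diag_coupling z = \rsum_(x : TX) pXY P x z.
  by apply: eq_bigr => x' _; apply: pXZ_diag.
rewrite /diag_coupling; case: eqP => [<-|_]; ring.
Qed.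

Lemma MI_XY_eq_MI_XZ : MI_XY P = MI_XZ P.
Proof.
apply: eq_bigr => x _; apply: eq_bigr => w _.
by rewrite -hsym /pZ; congr (plogr _ (_ * _)); apply: eq_bigr => x' _; apply: hsym.
Qed.

End DiagonalCoupling.

Theorem mainTheorem5 (TX TY : finType) (P : jdist TX TY TY)
  (hP : is_prob P)
  (hsym : forall (x : TX) (w : TY), pXY P x w = pXZ P x w) :
  UIt_Y P = 0%R /\ UIt_Z P = 0%R /\
  SIt P = MI_XY P /\ MI_XY P = MI_XZ P /\
  CIt P = MI_XY_Z P /\ MI_XY_Z P = MI_XZ_Y P.
Proof.
have hQ0 := diag_in_DeltaP hP hsym.
have hQ0_MI := diag_cond_indep hP hsym.
have eqMI := MI_XY_eq_MI_XZ hsym.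
split; first exact: UIt_Y_zero hQ0 hQ0_MI.
split; first exact: UIt_Z_zero hQ0 hQ0_MI eqMI.
split; first exact: SIt_eq_MI_XY hQ0 hQ0_MI.
split; first exact: eqMI.
split; first exact: CIt_eq_MI_XY_Z hQ0 hQ0_MI hP.
by rewrite (MI_XZ_Y_DeltaP eqMI (DeltaP_refl hP)).
Qed.
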